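(* Let $I=[x_1,x_N]$ with partition $x_1<\dots<x_N$ and affine maps $u_i(x)=a_ix+b_i$ with $u_i(x_1)=x_i$, $u_i(x_N)=x_{i+1}$ ($i\in\mathbb{N}_{N-1}$). Let $f,g\in C(I)$ with $f\ge g$ on $I$, and let $\{q_n\}$ be a sequence in $(0,1]$ with $\lim q_n=1$. Set $\phi(f-g,i)=\min_{x\in I}(f-g)(u_i(x))$ and $\Phi_n(f-g)=\max_{x\in I}M_{n,q_n}(f-g)(x)$. Suppose the continuous scaling functions satisfy $\|\alpha\|_\infty<1$ and, for all $n\in\mathbb{N}$, $i\in\mathbb{N}_{N-1}$, $x\in I$, \[ 0\le\alpha_i(x)\le\min\left\{\frac{\phi(f-g,i)}{\Phi_n(f-g)},1\right\}. \] Then the quantum MKZ-fractal functions $f^{(q_n,\alpha)}_n$ and $g^{(q_n,\alpha)}_n$ converge uniformly to $f$ and $g$ respectively, and $f^{(q_n,\alpha)}_n\ge g^{(q_n,\alpha)}_n$ on $I$ for all $n$.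
   Context: For $q\in(0,1]$: $[k]_q=\frac{1-q^k}{1-q}$ ($q\ne1$), $[k]_1=k$, $q$-factorials, $\binom{n}{k}_q=\frac{[n]_q!}{[k]_q![n-k]_q!}$. Quantum MKZ operator: $M_{n,q}h(x)=P_{n,q}(x)\sum_{k\ge0}\binom{n+k}{k}_q\left(\frac{x-x_1}{x_N-x_1}\right)^k h\!\left(x_1+(x_N-x_1)\frac{[k]_q}{[k+n]_q}\right)$ for $x_1\le x<x_N$, $M_{n,q}h(x_N)=h(x_N)$, $P_{n,q}(x)=\prod_{j=0}^n(x_N-x_1-q^j(x-x_1))/(x_N-x_1)^{n+1}$. $\|\alpha\|_\infty=\max_i\|\alpha_i\|_\infty$. The quantum MKZ-fractal function $h^{(q,\alpha)}_n$ of $h\in C(I)$ is the unique $G\in C(I)$ with $G(u_i(x))=h(u_i(x))+\alpha_i(x)(G(x)-M_{n,q}h(x))$ for all $x\in I$, $i\in\mathbb{N}_{N-1}$. *)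

From Stdlib Require Import Reals Lra.
From Coquelicot Require Import Coquelicot.
Open Scope R_scope.

Definition qint (q : R) (k : nat) : R :=
  if Req_EM_T q 1 then INR k else (1 - q ^ k) / (1 - q).

Fixpoint qfact (q : R) (k : nat) : R :=
  match k with
  | O => 1
  | S k' => qfact q k' * qint q (S k')
  end.

Definition qbinom (q : R) (n k : nat) : R :=
  qfact q n / (qfact q k * qfact q (n - k)).

Fixpoint prod_upto (n : nat) (F : nat -> R) : R :=
  match n with
  | O => F O
  | S n' => prod_upto n' F * F (S n')
  end.

Definition Pq (x1 xN : R) (n : nat) (q : R) (x : R) : R :=
  prod_upto n (fun j => xN - x1 - q ^ j * (x - x1)) / (xN - x1) ^ (n + 1).

Definition MKZ (x1 xN : R) (n : nat) (q : R) (h : R -> R) (x : R) : R :=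
  if Rlt_dec x xN then
    Pq x1 xN n q x *
    Series (fun k => qbinom q (n + k) k * ((x - x1) / (xN - x1)) ^ k
                     * h (x1 + (xN - x1) * (qint q k / qint q (k + n))))
  else h xN.

Definition inI (x1 xN x : R) : Prop := x1 <= x <= xN.

Definition cont_on (x1 xN : R) (h : R -> R) : Prop :=
  forall x, inI x1 xN x ->
    filterlim h (within (inI x1 xN) (locally x)) (locally (h x)).

(* min_{x in I} k(x) and max_{x in I} k(x) (as inf / sup, attained for continuous k) *)
Definition minI (x1 xN : R) (k : R -> R) : R :=
  real (Glb_Rbar (fun y => exists x, inI x1 xN x /\ y = k x)).
Definition maxI (x1 xN : R) (k : R -> R) : R :=
  real (Lub_Rbar (fun y => exists x, inI x1 xN x /\ y = k x)).

(* G is the quantum MKZ-fractal function h_n^{(q,alpha)} for the IFS u_i(x) = a_i x + b_i,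
   i in N_{N-1} = {1,...,N-1}: the (unique) G in C(I) satisfying the self-referential equation *)
Definition is_qMKZ_fractal (x : nat -> R) (N : nat) (a b : nat -> R)
    (alpha : nat -> R -> R) (n : nat) (q : R) (h G : R -> R) : Prop :=
  cont_on (x 1%nat) (x N) G /\
  forall (i : nat) (t : R), (1 <= i <= N - 1)%nat -> inI (x 1%nat) (x N) t ->
    G (a i * t + b i) = h (a i * t + b i)
       + alpha i t * (G t - MKZ (x 1%nat) (x N) n q h t).

From Stdlib Require Import Reals Lra Lia.
From Coquelicot Require Import Coquelicot.
Open Scope R_scope.

(* Both conclusions come from the self-referential equation
     G (u_i x) - h (u_i x) = alpha_i x * (G x - M_{n,q} h x)
   together with the fact that the u_i cover I: a bounded E on I with
   E (u_i x) <= c E x + w for all i and x is bounded by w / (1 - c).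
   For convergence take E = |G - h| and w = c ||M_{n,q_n} h - h||; this w tends to 0
   because M_{n,q} is a positive operator reproducing 1 and x whose second central
   moment is at most 1/[n+1]_q (Korovkin), and [n+1]_{q_n} -> oo when q_n -> 1.
   For the order take E = max 0 (g^ - f^): the bound alpha_i <= phi_i / Phi_n gives
   alpha_i M (f - g) <= (f - g) o u_i, hence w = 0. *)

(** * q-integers and q-binomial coefficients *)

Lemma pow_le_1 q m : 0 <= q <= 1 -> q ^ m <= 1.
Proof. intros hq; rewrite <- (pow1 m); apply pow_incr; lra. Qed.

Lemma qint_0 q : qint q 0 = 0.
Proof. unfold qint; destruct (Req_EM_T q 1); simpl; [reflexivity | field; lra]. Qed.

Lemma qint_S q k : qint q (S k) = 1 + q * qint q k.
Proof.
unfold qint; destruct (Req_EM_T q 1) as [->|ne].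
- rewrite S_INR; ring.
- simpl; field; intro; apply ne; lra.
Qed.

Lemma qint_add q k m : qint q (k + m) = qint q k + q ^ k * qint q m.
Proof. induction k as [|k IH]; simpl; rewrite ?qint_S, ?IH, ?qint_0; ring. Qed.

Lemma qint_ge0 q k : 0 < q -> 0 <= qint q k.
Proof. intros hq; induction k; rewrite ?qint_0, ?qint_S; nra. Qed.

Lemma qint_S_ge1 q k : 0 < q -> 1 <= qint q (S k).
Proof. intros hq; rewrite qint_S; pose proof (qint_ge0 q k hq); nra. Qed.

Lemma qint_le q k m : 0 < q -> (k <= m)%nat -> qint q k <= qint q m.
Proof.
intros hq hkm; replace m with (k + (m - k))%nat by lia; rewrite qint_add.
pose proof (qint_ge0 q (m - k) hq); pose proof (pow_lt q k hq); nra.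
Qed.

Lemma qint_mul_1_sub q m : qint q m * (1 - q) = 1 - q ^ m.
Proof. induction m as [|m IH]; simpl; rewrite ?qint_0, ?qint_S; [ring | nra]. Qed.

Lemma qint_ge_mul_pow q m : 0 < q <= 1 -> INR m * q ^ m <= qint q m.
Proof.
intros hq; induction m as [|m IH]; [simpl; rewrite qint_0; lra|].
rewrite S_INR, qint_S; simpl pow.
assert (q * q ^ m <= 1) by (apply (pow_le_1 q (S m)); lra).
assert (q * (INR m * q ^ m) <= q * qint q m) by (apply Rmult_le_compat_l; lra).
lra.
Qed.

Lemma qfact_gt0 q k : 0 < q -> 0 < qfact q k.
Proof. intros hq; induction k; simpl; [lra|]; pose proof (qint_S_ge1 q k hq); nra. Qed.

Lemma qbinom_add_l q n k : qbinom q (n + k) k = qfact q (n + k) / (qfact q k * qfact q n).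
Proof. unfold qbinom; replace (n + k - k)%nat with n by lia; reflexivity. Qed.

Lemma qbinom_gt0 q n k : 0 < q -> 0 < qbinom q (n + k) k.
Proof.
intros hq; rewrite qbinom_add_l.
pose proof (qfact_gt0 q (n + k) hq); pose proof (qfact_gt0 q k hq); pose proof (qfact_gt0 q n hq).
apply Rdiv_lt_0_compat; nra.
Qed.

Lemma qbinom_0 q n : 0 < q -> qbinom q n 0 = 1.
Proof. intros hq; unfold qbinom; rewrite Nat.sub_0_r; simpl; pose proof (qfact_gt0 q n hq); field; lra. Qed.

Lemma qbinom_diag q k : 0 < q -> qbinom q k k = 1.
Proof. intros hq; unfold qbinom; rewrite Nat.sub_diag; simpl; pose proof (qfact_gt0 q k hq); field; lra. Qed.

Lemma qbinom_pascal q m k : 0 < q ->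
  qbinom q (S m + S k) (S k) = qbinom q (S m + k) k + q ^ S k * qbinom q (m + S k) (S k).
Proof.
intros hq; rewrite !qbinom_add_l.
replace (S m + S k)%nat with (S (S (m + k))) by lia.
replace (S m + k)%nat with (S (m + k)) by lia.
replace (m + S k)%nat with (S (m + k)) by lia.
assert (E : qint q (S (S (m + k))) = qint q (S k) + q ^ S k * qint q (S m))
  by (rewrite <- qint_add; f_equal; lia).
simpl qfact; rewrite E.
pose proof (qfact_gt0 q k hq); pose proof (qfact_gt0 q m hq); pose proof (qfact_gt0 q (m + k) hq).
pose proof (qint_S_ge1 q k hq); pose proof (qint_S_ge1 q m hq); pose proof (qint_S_ge1 q (m + k) hq).
field; repeat split; lra.
Qed.

Lemma qbinom_ratio q n k : 0 < q ->
  qbinom q (n + S k) (S k) * (qint q (S k) / qint q (S k + n)) = qbinom q (n + k) k.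
Proof.
intros hq; rewrite !qbinom_add_l.
replace (n + S k)%nat with (S (n + k)) by lia; replace (S k + n)%nat with (S (n + k)) by lia.
simpl qfact at 1 2.
pose proof (qfact_gt0 q k hq); pose proof (qfact_gt0 q n hq).
pose proof (qint_S_ge1 q k hq); pose proof (qint_S_ge1 q (n + k) hq).
field; repeat split; lra.
Qed.

Lemma qbinom_hockey_stick q n k : 0 < q ->
  qbinom q (S n + k) k = sum_f_R0 (fun j => q ^ j * qbinom q (n + j) j) k.
Proof.
intros hq; induction k as [|k IH]; simpl sum_f_R0.
- rewrite !qbinom_0 by lra; lra.
- rewrite qbinom_pascal, IH by lra; simpl pow; ring.
Qed.

Lemma ex_series_Rabs_of_ge0 (a : nat -> R) (l : R) :
  (forall k, 0 <= a k) -> is_series a l -> ex_series (fun k => Rabs (a k)).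
Proof.
intros ha hl; exists l; apply (is_series_ext a); [|exact hl].
intros k; rewrite Rabs_pos_eq; auto.
Qed.

Lemma ex_series_Rle (a b : nat -> R) :
  (forall k, Rabs (a k) <= b k) -> ex_series b -> ex_series a.
Proof. exact (@ex_series_le _ R_CompleteNormedModule a b). Qed.

(* [|u - h0|] is dominated by the parabola [eps + K (t - y)^2], whose [w]-average is
   [eps + K * variance]. *)
Lemma weighted_series_deviation (w t u : nat -> R) (y v h0 eps K : R) :
  (forall k, 0 <= w k) -> is_series w 1 -> is_series (fun k => w k * t k) y ->
  ex_series (fun k => w k * t k ^ 2) -> Series (fun k => w k * t k ^ 2) <= y ^ 2 + v ->
  0 <= K -> (forall k, Rabs (u k - h0) <= eps + K * (t k - y) ^ 2) ->
  ex_series (fun k => w k * u k) /\ Rabs (Series (fun k => w k * u k) - h0) <= eps + K * v.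
Proof.
intros hw hw1 hwt hex2 hS2 hK hu.
set (S2 := Series (fun k => w k * t k ^ 2)).
set (E := fun k => eps * w k + K * (w k * t k ^ 2) + (-2 * K * y) * (w k * t k) + K * y ^ 2 * w k).
assert (hE : is_series E (eps * 1 + K * S2 + (-2 * K * y) * y + K * y ^ 2 * 1)).
{ repeat apply (is_series_plus (V := R_NormedModule));
    apply (is_series_scal_l (V := R_NormedModule)); auto; apply Series_correct; exact hex2. }
set (d := fun k => w k * (u k - h0)).
assert (hdE : forall k, Rabs (d k) <= E k).
{ intros k; unfold d, E; rewrite Rabs_mult, Rabs_pos_eq by auto.
  replace (eps * w k + K * (w k * t k ^ 2) + -2 * K * y * (w k * t k) + K * y ^ 2 * w k)
    with (w k * (eps + K * (t k - y) ^ 2)) by ring.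
  apply Rmult_le_compat_l; auto. }
assert (hexE : ex_series E) by (eexists; exact hE).
assert (hexd : ex_series d) by exact (ex_series_Rle _ _ hdE hexE).
assert (hexad : ex_series (fun k => Rabs (d k)))
  by (apply (ex_series_Rle _ E); auto; intros k; rewrite Rabs_Rabsolu; auto).
assert (hwu : forall k, w k * u k = d k + h0 * w k) by (intros k; unfold d; ring).
assert (hexwu : ex_series (fun k => w k * u k)).
{ apply (ex_series_ext (fun k => d k + h0 * w k)); [intros k; symmetry; apply hwu|].
  apply (ex_series_plus (V := R_NormedModule)); [exact hexd|].
  apply (ex_series_scal_l (V := R_NormedModule)); eexists; exact hw1. }
split; [exact hexwu|].
replace (Series (fun k => w k * u k) - h0) with (Series d).
2: { rewrite (Series_ext _ _ hwu), Series_plus, Series_scal_l, (is_series_unique _ _ hw1);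
     [ring | exact hexd | apply (ex_series_scal_l (V := R_NormedModule)); eexists; exact hw1]. }
eapply Rle_trans; [apply Series_Rabs; exact hexad|].
assert (hsum : Series (fun k => Rabs (d k)) <= Series E)
  by (apply Series_le; [intros k; split; [apply Rabs_pos | apply hdE] | exact hexE]).
rewrite (is_series_unique _ _ hE) in hsum.
assert (K * S2 <= K * (y ^ 2 + v)) by (apply Rmult_le_compat_l; auto).
lra.
Qed.

(** * Moments of the quantum MKZ operator *)

(* [qpoch q n y] is the q-Pochhammer symbol (y; q)_(n+1). *)
Definition qpoch (q : R) (n : nat) (y : R) : R := prod_upto n (fun j => 1 - q ^ j * y).

Lemma qpoch_S q n y : qpoch q (S n) y = (1 - y) * qpoch q n (q * y).
Proof.
unfold qpoch; induction n as [|n IH]; simpl prod_upto.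
- simpl; ring.
- simpl prod_upto in IH; rewrite IH; simpl pow; ring.
Qed.

Lemma qpoch_gt0 q n y : 0 < q <= 1 -> 0 <= y < 1 -> 0 < qpoch q n y.
Proof.
intros hq hy; unfold qpoch; induction n as [|n IH]; simpl prod_upto; [simpl; lra|].
apply Rmult_lt_0_compat; [exact IH|].
assert (hle : q * q ^ n * y <= y) by (pose proof (pow_le_1 q (S n) ltac:(lra)); simpl in *; nra).
lra.
Qed.

(* The q-binomial theorem with negative exponent: [1 / (y;q)_(n+1)] is a Cauchy
   product of geometric series, and the hockey-stick identity identifies its coefficients. *)
Lemma is_series_qbinom_pow q n y : 0 < q <= 1 -> 0 <= y < 1 ->
  is_series (fun k => qbinom q (n + k) k * y ^ k) (/ qpoch q n y).
Proof.
intros hq; revert y; induction n as [|n IH]; intros y hy.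
- unfold qpoch; simpl; rewrite Rmult_1_l.
  apply (is_series_ext (fun k => y ^ k)).
  + intros k; rewrite qbinom_diag by lra; apply eq_sym, Rmult_1_l.
  + apply is_series_geom; rewrite Rabs_pos_eq; lra.
- assert (hqy : 0 <= q * y < 1) by nra.
  set (a := fun j => qbinom q (n + j) j * (q * y) ^ j).
  assert (ha : forall j, 0 <= a j).
  { intros j; pose proof (qbinom_gt0 q n j ltac:(lra)); pose proof (pow_le (q * y) j ltac:(lra)).
    unfold a; nra. }
  assert (hgeom : is_series (fun j => y ^ j) (/ (1 - y))) by (apply is_series_geom; rewrite Rabs_pos_eq; lra).
  pose proof (is_series_mult a (fun j => y ^ j) _ _ (IH (q * y) hqy) hgeom
    (ex_series_Rabs_of_ge0 a _ ha (IH (q * y) hqy))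
    (ex_series_Rabs_of_ge0 _ _ (fun j => pow_le y j ltac:(lra)) hgeom)) as hprod.
  rewrite qpoch_S, Rinv_mult, Rmult_comm.
  refine (is_series_ext _ _ _ _ hprod); intros k; cbv beta.
  rewrite qbinom_hockey_stick by lra.
  rewrite Rmult_comm, scal_sum; apply sum_eq; intros j hj; unfold a.
  replace (y ^ k) with (y ^ j * y ^ (k - j)) by (rewrite <- pow_add; f_equal; lia).
  rewrite Rpow_mult_distr; ring.
Qed.

Definition mkz_node (q : R) (n k : nat) : R := qint q k / qint q (k + n).

Definition mkz_weight (q : R) (n : nat) (y : R) (k : nat) : R :=
  qpoch q n y * (qbinom q (n + k) k * y ^ k).

Lemma mkz_node_0 q n : mkz_node q n 0 = 0.
Proof. unfold mkz_node; rewrite qint_0; unfold Rdiv; ring. Qed.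

Lemma mkz_node_bounds q n k : 0 < q -> 0 <= mkz_node q n k <= 1.
Proof.
intros hq; destruct k as [|k]; [rewrite mkz_node_0; lra|].
unfold mkz_node; pose proof (qint_S_ge1 q k hq).
pose proof (qint_le q (S k) (S k + n) hq ltac:(lia)).
split; [apply Rdiv_le_0_compat; lra|].
unfold Rdiv; rewrite <- (Rinv_r (qint q (S k + n))) by lra.
apply Rmult_le_compat_r; [apply Rlt_le, Rinv_0_lt_compat|]; lra.
Qed.

Lemma mkz_node_S_le q n k : 0 < q ->
  mkz_node q n (S k) <= / qint q (S n) + mkz_node q n k.
Proof.
intros hq; unfold mkz_node; rewrite Nat.add_succ_l, !qint_S.
pose proof (qint_ge0 q k hq); pose proof (qint_ge0 q n hq).
pose proof (qint_le q n (k + n) hq ltac:(lia)).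
assert (/ (1 + q * qint q (k + n)) <= / (1 + q * qint q n)) by (apply Rinv_le_contravar; nra).
assert (q * qint q k / (1 + q * qint q (k + n)) <= qint q k / qint q (k + n)).
{ destruct k as [|k]; [rewrite qint_0; unfold Rdiv; lra|].
  pose proof (qint_le q (S k) (S k + n) hq ltac:(lia)); pose proof (qint_S_ge1 q k hq).
  apply Rmult_le_reg_r with ((1 + q * qint q (S k + n)) * qint q (S k + n)); [nra|].
  field_simplify; nra. }
replace ((1 + q * qint q k) / (1 + q * qint q (k + n))) with
  (/ (1 + q * qint q (k + n)) + q * qint q k / (1 + q * qint q (k + n))) by (field; nra).
lra.
Qed.

Section Moments.

Variables (q : R) (n : nat) (y : R).
Hypotheses (hq : 0 < q <= 1) (hy : 0 <= y < 1).

Let w := mkz_weight q n y.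
Let t := mkz_node q n.

Lemma mkz_weight_ge0 k : 0 <= w k.
Proof.
pose proof (qpoch_gt0 q n y hq hy); pose proof (qbinom_gt0 q n k ltac:(lra)).
pose proof (pow_le y k ltac:(lra)); unfold w, mkz_weight.
apply Rmult_le_pos; [|apply Rmult_le_pos]; lra.
Qed.

Lemma mkz_weight_S_node k : w (S k) * t (S k) = y * w k.
Proof.
unfold w, t, mkz_weight, mkz_node; rewrite <- (qbinom_ratio q n k) by lra; simpl pow; ring.
Qed.

Lemma is_series_mkz_weight : is_series w 1.
Proof.
pose proof (qpoch_gt0 q n y hq hy).
replace 1 with (qpoch q n y * / qpoch q n y) by (field; lra).
exact (is_series_scal_l _ _ _ (is_series_qbinom_pow q n y hq hy)).
Qed.

Lemma is_series_mkz_weight_node : is_series (fun k => w k * t k) y.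
Proof.
apply is_series_decr_1.
change (is_series (fun k => w (S k) * t (S k)) (y - w 0%nat * t 0%nat)).
replace (y - w 0%nat * t 0%nat) with (y * 1) by (unfold t; rewrite mkz_node_0; ring).
refine (is_series_ext _ _ _ _ (is_series_scal_l y _ _ is_series_mkz_weight)).
intros k; symmetry; apply mkz_weight_S_node.
Qed.

Lemma mkz_second_moment :
  ex_series (fun k => w k * t k ^ 2) /\ Series (fun k => w k * t k ^ 2) <= y ^ 2 + y / qint q (S n).
Proof.
set (b := fun k => y / qint q (S n) * w k + y * (w k * t k)).
assert (hb : is_series b (y / qint q (S n) * 1 + y * y)).
{ exact (is_series_plus _ _ _ _ (is_series_scal_l _ _ _ is_series_mkz_weight)
           (is_series_scal_l _ _ _ is_series_mkz_weight_node)). }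
assert (hab : forall k, 0 <= w (S k) * t (S k) ^ 2 <= b k).
{ intros k; pose proof (mkz_node_bounds q n (S k) ltac:(lra)); pose proof (mkz_weight_ge0 (S k)).
  split; [nra|].
  replace (w (S k) * t (S k) ^ 2) with (y * w k * t (S k)) by (rewrite <- mkz_weight_S_node; ring).
  pose proof (mkz_node_S_le q n k ltac:(lra)); pose proof (mkz_weight_ge0 k).
  assert (y * w k * t (S k) <= y * w k * (/ qint q (S n) + t k))
    by (apply Rmult_le_compat_l; [nra | assumption]).
  unfold b; lra. }
assert (hex : ex_series (fun k => w (S k) * t (S k) ^ 2)).
{ apply (ex_series_Rle _ b); [|exists (y / qint q (S n) * 1 + y * y); exact hb].
  intros k; rewrite Rabs_pos_eq; apply hab. }
split; [apply ex_series_incr_1; exact hex|].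
rewrite Series_incr_1 by (apply ex_series_incr_1; exact hex).
unfold t at 1; rewrite mkz_node_0.
assert (hle : Series (fun k => w (S k) * t (S k) ^ 2) <= Series b)
  by (apply Series_le; [exact hab | exists (y / qint q (S n) * 1 + y * y); exact hb]).
rewrite (is_series_unique _ _ hb) in hle; replace (w 0%nat * 0 ^ 2) with 0 by ring; lra.
Qed.

End Moments.

(** * Korovkin estimate for the quantum MKZ operator *)

Lemma prod_upto_ext n F G :
  (forall j, (j <= n)%nat -> F j = G j) -> prod_upto n F = prod_upto n G.
Proof.
induction n as [|n IH]; intros h; simpl; [apply h; lia|].
rewrite IH, h; auto; intros; apply h; lia.
Qed.

Lemma prod_upto_scale n c F : prod_upto n (fun j => c * F j) = c ^ (n + 1) * prod_upto n F.
Proof. induction n as [|n IH]; simpl; [ring|]; rewrite IH, Nat.add_1_r; simpl; ring. Qed.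

Lemma Pq_eq_qpoch x1 xN n q x : x1 < xN ->
  Pq x1 xN n q x = qpoch q n ((x - x1) / (xN - x1)).
Proof.
intros hI; unfold Pq, qpoch.
rewrite (prod_upto_ext n _ (fun j => (xN - x1) * (1 - q ^ j * ((x - x1) / (xN - x1)))))
  by (intros; field; lra).
rewrite prod_upto_scale; field; apply pow_nonzero; lra.
Qed.

Lemma MKZ_xN x1 xN n q h : MKZ x1 xN n q h xN = h xN.
Proof. unfold MKZ; destruct (Rlt_dec xN xN); [lra | reflexivity]. Qed.

Section MKZ_interval.

Variables (x1 xN : R) (n : nat) (q : R).
Hypotheses (hI : x1 < xN) (hq : 0 < q <= 1).

Let y x := (x - x1) / (xN - x1).
Let node k := x1 + (xN - x1) * mkz_node q n k.

Lemma MKZ_series h x : x1 <= x < xN ->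
  MKZ x1 xN n q h x = Series (fun k => mkz_weight q n (y x) k * h (node k)).
Proof.
intros hx; unfold MKZ; destruct (Rlt_dec x xN) as [_|]; [|lra].
rewrite Pq_eq_qpoch, <- Series_scal_l by lra.
apply Series_ext; intros k; unfold mkz_weight, node, mkz_node, y; ring.
Qed.

Lemma MKZ_node_in k : inI x1 xN (node k).
Proof. pose proof (mkz_node_bounds q n k ltac:(lra)); unfold inI, node; nra. Qed.

Lemma MKZ_deviation h x h0 eps K : x1 <= x < xN -> 0 <= K ->
  (forall s, inI x1 xN s -> Rabs (h s - h0) <= eps + K * ((s - x) / (xN - x1)) ^ 2) ->
  ex_series (fun k => mkz_weight q n (y x) k * h (node k)) /\
  Rabs (MKZ x1 xN n q h x - h0) <= eps + K / qint q (S n).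
Proof.
intros hx hK hh.
assert (hy : 0 <= y x < 1).
{ unfold y; split; [apply Rdiv_le_0_compat; lra|].
  apply Rmult_lt_reg_r with (xN - x1); [lra|]; unfold Rdiv; rewrite Rmult_assoc, Rinv_l; lra. }
destruct (mkz_second_moment q n (y x) hq hy) as [hex2 hS2].
destruct (weighted_series_deviation (mkz_weight q n (y x)) (mkz_node q n) (fun k => h (node k))
            (y x) (y x / qint q (S n)) h0 eps K (mkz_weight_ge0 q n (y x) hq hy)
            (is_series_mkz_weight q n (y x) hq hy) (is_series_mkz_weight_node q n (y x) hq hy)
            hex2 hS2 hK) as [hex hdev].
{ intros k; replace (mkz_node q n k - y x) with ((node k - x) / (xN - x1))
    by (unfold node, y; field; lra).
  apply hh, MKZ_node_in. }
split; [exact hex|].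
rewrite MKZ_series by exact hx; eapply Rle_trans; [exact hdev|].
pose proof (qint_S_ge1 q n ltac:(lra)).
apply Rplus_le_compat_l; unfold Rdiv.
rewrite <- Rmult_assoc; apply Rmult_le_compat_r; [apply Rlt_le, Rinv_0_lt_compat; lra|].
rewrite <- (Rmult_1_r K) at 2; apply Rmult_le_compat_l; lra.
Qed.

Lemma MKZ_bound h B x : inI x1 xN x ->
  (forall s, inI x1 xN s -> Rabs (h s) <= B) -> Rabs (MKZ x1 xN n q h x) <= B.
Proof.
intros hx hB; destruct (Req_dec x xN) as [->|ne]; [rewrite MKZ_xN; apply hB; exact hx|].
destruct (MKZ_deviation h x 0 B 0) as [_ hdev]; [unfold inI in hx; lra | lra | |].
- intros s hs; rewrite Rminus_0_r, Rmult_0_l, Rplus_0_r; apply hB, hs.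
- rewrite Rminus_0_r in hdev; unfold Rdiv in hdev; rewrite Rmult_0_l, Rplus_0_r in hdev; exact hdev.
Qed.

Lemma MKZ_sub f g Bf Bg x : inI x1 xN x ->
  (forall s, inI x1 xN s -> Rabs (f s) <= Bf) -> (forall s, inI x1 xN s -> Rabs (g s) <= Bg) ->
  MKZ x1 xN n q (fun s => f s - g s) x = MKZ x1 xN n q f x - MKZ x1 xN n q g x.
Proof.
intros hx hf hg; destruct (Req_dec x xN) as [->|ne]; [rewrite !MKZ_xN; reflexivity|].
assert (hx' : x1 <= x < xN) by (unfold inI in hx; lra).
assert (bounded_ex : forall h B, (forall s, inI x1 xN s -> Rabs (h s) <= B) ->
          ex_series (fun k => mkz_weight q n (y x) k * h (node k))).
{ intros h B hB; apply (MKZ_deviation h x 0 B 0 hx'); [lra|].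
  intros s hs; rewrite Rminus_0_r, Rmult_0_l, Rplus_0_r; apply hB, hs. }
rewrite !MKZ_series, <- Series_minus by (auto; eapply bounded_ex; eauto).
apply Series_ext; intros k; ring.
Qed.

End MKZ_interval.

Definition clamp (x1 xN s : R) : R := Rmax x1 (Rmin xN s).

Lemma clamp_in x1 xN s : x1 <= xN -> inI x1 xN (clamp x1 xN s).
Proof.
intros; unfold inI, clamp; split; [apply Rmax_l|].
apply Rmax_lub; [assumption | apply Rmin_l].
Qed.

Lemma clamp_id x1 xN s : inI x1 xN s -> clamp x1 xN s = s.
Proof. intros [h1 h2]; unfold clamp; rewrite Rmin_right, Rmax_right; lra. Qed.

Lemma clamp_1_lipschitz x1 xN u v : x1 <= xN ->
  Rabs (clamp x1 xN u - clamp x1 xN v) <= Rabs (u - v).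
Proof.
intros; unfold clamp, Rmax, Rmin.
repeat destruct Rle_dec; unfold Rabs; repeat destruct Rcase_abs; lra.
Qed.

(* Clamping turns continuity relative to [x1, xN] into continuity on all of R,
   so that the Stdlib extreme value and Heine theorems apply. *)
Lemma continuity_pt_clamp x1 xN h c : x1 <= xN -> cont_on x1 xN h ->
  continuity_pt (fun s => h (clamp x1 xN s)) c.
Proof.
intros hI hc; apply continuity_pt_filterlim.
apply (filterlim_comp _ _ _ (clamp x1 xN) h _ (within (inI x1 xN) (locally (clamp x1 xN c)))).
- intros P [eps hP]; exists eps; intros s hs; apply hP; [|apply clamp_in; auto].
  change (Rabs (clamp x1 xN s - clamp x1 xN c) < eps).
  eapply Rle_lt_trans; [apply clamp_1_lipschitz; auto | exact hs].
- apply hc, clamp_in; auto.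
Qed.

Lemma cont_on_bounded x1 xN h : x1 <= xN -> cont_on x1 xN h ->
  exists B, forall s, inI x1 xN s -> Rabs (h s) <= B.
Proof.
intros hI hc; set (he := fun s => h (clamp x1 xN s)).
assert (hce : forall c, x1 <= c <= xN -> continuity_pt he c)
  by (intros; apply continuity_pt_clamp; auto).
destruct (continuity_ab_maj he x1 xN hI hce) as [M [hM _]].
destruct (continuity_ab_min he x1 xN hI hce) as [m [hm _]].
exists (Rmax (Rabs (he M)) (Rabs (he m))); intros s hs.
specialize (hM s hs); specialize (hm s hs); unfold he in hM, hm; rewrite (clamp_id x1 xN s) in hM, hm by exact hs.
apply Rabs_le; split.
- pose proof (Rmax_r (Rabs (he M)) (Rabs (he m))); pose proof (Rabs_maj2 (he m)); unfold he in *; lra.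
- pose proof (Rmax_l (Rabs (he M)) (Rabs (he m))); pose proof (Rle_abs (he M)); unfold he in *; lra.
Qed.

Lemma cont_on_unif x1 xN h : x1 <= xN -> cont_on x1 xN h ->
  forall eps, 0 < eps -> exists delta, 0 < delta /\ forall u v, inI x1 xN u -> inI x1 xN v ->
    Rabs (u - v) < delta -> Rabs (h u - h v) <= eps.
Proof.
intros hI hc eps he; set (he' := fun s => h (clamp x1 xN s)).
assert (hce : forall c, x1 <= c <= xN -> continuity_pt he' c)
  by (intros; apply continuity_pt_clamp; auto).
destruct (Heine he' _ (compact_P3 x1 xN) hce (mkposreal eps he)) as [d hd].
exists d; split; [apply cond_pos|]; intros u v hu hv huv.
specialize (hd u v hu hv huv); unfold he' in hd; rewrite !clamp_id in hd by assumption.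
simpl in hd; lra.
Qed.

Lemma unif_cont_quadratic_bound (P : R -> Prop) h B eps delta : 0 < delta ->
  (forall s, P s -> Rabs (h s) <= B) ->
  (forall u v, P u -> P v -> Rabs (u - v) < delta -> Rabs (h u - h v) <= eps) ->
  forall u v, P u -> P v -> Rabs (h u - h v) <= eps + 2 * B / delta ^ 2 * (u - v) ^ 2.
Proof.
intros hd hB hu u v pu pv.
assert (he : 0 <= eps).
{ eapply Rle_trans; [apply Rabs_pos | apply (hu u u pu pu)].
  rewrite Rminus_diag, Rabs_R0; exact hd. }
assert (hB0 : 0 <= B) by (eapply Rle_trans; [apply Rabs_pos | apply (hB u pu)]).
assert (hK : 0 <= 2 * B / delta ^ 2 * (u - v) ^ 2)
  by (apply Rmult_le_pos; [apply Rdiv_le_0_compat; [lra | apply pow_lt; lra] | apply pow2_ge_0]).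
destruct (Rlt_dec (Rabs (u - v)) delta) as [lt|ge].
- pose proof (hu u v pu pv lt); lra.
- assert (hsq : delta ^ 2 <= (u - v) ^ 2)
    by (rewrite <- (pow2_abs (u - v)); apply pow_incr; lra).
  assert (2 * B <= 2 * B / delta ^ 2 * (u - v) ^ 2).
  { unfold Rdiv; rewrite Rmult_assoc; rewrite <- (Rmult_1_r (2 * B)) at 1.
    apply Rmult_le_compat_l; [lra|].
    apply Rmult_le_reg_l with (delta ^ 2); [nra|].
    rewrite <- Rmult_assoc, Rinv_r; nra. }
  eapply Rle_trans; [unfold Rminus; apply Rabs_triang|]; rewrite Rabs_Ropp.
  pose proof (hB u pu); pose proof (hB v pv); lra.
Qed.

Lemma MKZ_approx x1 xN h : x1 < xN -> cont_on x1 xN h ->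
  forall eps, 0 < eps -> exists K, 0 <= K /\ forall n q x, 0 < q <= 1 -> inI x1 xN x ->
    Rabs (MKZ x1 xN n q h x - h x) <= eps + K / qint q (S n).
Proof.
intros hI hc eps he.
destruct (cont_on_bounded x1 xN h ltac:(lra) hc) as [B hB].
destruct (cont_on_unif x1 xN h ltac:(lra) hc eps he) as [d [hd hu]].
pose proof (unif_cont_quadratic_bound _ h B eps d hd hB hu) as hquad.
assert (hB0 : 0 <= B) by (eapply Rle_trans; [apply Rabs_pos | apply (hB x1); unfold inI; lra]).
exists (2 * B / d ^ 2 * (xN - x1) ^ 2); split; [apply Rmult_le_pos; [apply Rdiv_le_0_compat|]; nra|].
intros n q x hq hx.
pose proof (qint_S_ge1 q n ltac:(lra)).
assert (0 <= 2 * B / d ^ 2 * (xN - x1) ^ 2 / qint q (S n))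
  by (apply Rdiv_le_0_compat; [apply Rmult_le_pos; [apply Rdiv_le_0_compat|]; nra | lra]).
destruct (Req_dec x xN) as [->|ne]; [rewrite MKZ_xN, Rminus_diag, Rabs_R0; lra|].
apply (MKZ_deviation x1 xN n q hI hq h x (h x)); [unfold inI in hx; lra | apply Rmult_le_pos; [apply Rdiv_le_0_compat|]; nra|].
intros s hs; rewrite Rmult_assoc, <- Rpow_mult_distr.
replace ((xN - x1) * ((s - x) / (xN - x1))) with (s - x) by (field; lra).
apply hquad; assumption.
Qed.

(* Either [q ^ (n+1) <= 1/2], and then [[n+1]_q = (1 - q^(n+1)) / (1 - q) >= 1 / (2 (1 - q))],
   or [[n+1]_q >= (n+1) q^(n+1) > (n+1) / 2]. *)
Lemma is_lim_seq_qint_S (qs : nat -> R) : (forall n, 0 < qs n <= 1) -> is_lim_seq qs 1 ->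
  is_lim_seq (fun n => qint (qs n) (S n)) p_infty.
Proof.
intros hq hl; apply is_lim_seq_spec; intros M.
set (K := Rmax M 1).
assert (hK : 1 <= K /\ M <= K) by (split; [apply Rmax_r | apply Rmax_l]).
apply is_lim_seq_spec in hl.
destruct (hl (mkposreal (/ (2 * K)) ltac:(apply Rinv_0_lt_compat; lra))) as [N1 hN1].
destruct (INR_unbounded (2 * K)) as [N2 hN2].
exists (max N1 N2); intros n hn.
specialize (hN1 n ltac:(lia)); simpl in hN1.
specialize (hq n); set (q := qs n) in *.
pose proof (qint_mul_1_sub q (S n)) as hgeom.
pose proof (qint_ge_mul_pow q (S n) hq) as hlow.
pose proof (qint_ge0 q (S n) ltac:(lra)).
destruct (Rle_dec (q ^ S n) (/ 2)) as [small|big].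
- assert (h1q : 0 < 1 - q < / (2 * K)).
  { split; [|apply Rabs_def2 in hN1; lra].
    destruct (Req_dec q 1) as [e|e]; [rewrite e, pow1 in small; lra | lra]. }
  assert (qint q (S n) * / (2 * K) > / 2) by nra.
  assert (/ (2 * K) * (2 * K) = 1) by (field; lra).
  nra.
- assert (INR N2 <= INR (S n)) by (apply le_INR; lia).
  pose proof (pos_INR (S n)); nra.
Qed.

Lemma MKZ_unif_conv x1 xN h (qs : nat -> R) : x1 < xN -> cont_on x1 xN h ->
  (forall n, 0 < qs n <= 1) -> is_lim_seq qs 1 ->
  forall eps, 0 < eps -> exists n0, forall n, (n0 <= n)%nat -> forall x, inI x1 xN x ->
    Rabs (MKZ x1 xN n (qs n) h x - h x) <= eps.
Proof.
intros hI hc hq hl eps he.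
destruct (MKZ_approx x1 xN h hI hc (eps / 2) ltac:(lra)) as [K [hK happrox]].
pose proof (is_lim_seq_qint_S qs hq hl) as hgrow; apply is_lim_seq_spec in hgrow.
destruct (hgrow (2 * K / eps)) as [n0 hn0].
exists n0; intros n hn x hx.
specialize (hn0 n hn); pose proof (qint_S_ge1 (qs n) n ltac:(apply hq)).
assert (K / qint (qs n) (S n) <= eps / 2).
{ apply Rmult_le_reg_r with (qint (qs n) (S n)); [lra|].
  unfold Rdiv; rewrite Rmult_assoc, Rinv_l by lra.
  apply Rmult_lt_compat_r with (r := eps) in hn0; [|lra].
  unfold Rdiv in hn0; rewrite Rmult_assoc, Rinv_l, Rmult_1_r in hn0 by lra; lra. }
pose proof (happrox n (qs n) x (hq n) hx); lra.
Qed.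

(** * Quantum MKZ-fractal functions *)

Lemma minI_bounds x1 xN k t : inI x1 xN t -> (forall s, inI x1 xN s -> 0 <= k s) ->
  0 <= minI x1 xN k <= k t.
Proof.
intros ht hk; unfold minI.
destruct (Glb_Rbar_correct (fun y => exists x, inI x1 xN x /\ y = k x)) as [lb glb].
assert (h1 : Rbar_le (Glb_Rbar (fun y => exists x, inI x1 xN x /\ y = k x)) (k t)) by (apply lb; eauto).
assert (h2 : Rbar_le 0 (Glb_Rbar (fun y => exists x, inI x1 xN x /\ y = k x)))
  by (apply glb; intros y [x [hx ->]]; apply hk, hx).
destruct (Glb_Rbar _); simpl in *; try contradiction; lra.
Qed.

Lemma le_maxI x1 xN k t B : inI x1 xN t -> (forall s, inI x1 xN s -> k s <= B) ->
  k t <= maxI x1 xN k.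
Proof.
intros ht hk; unfold maxI.
destruct (Lub_Rbar_correct (fun y => exists x, inI x1 xN x /\ y = k x)) as [ub lub].
assert (h1 : Rbar_le (k t) (Lub_Rbar (fun y => exists x, inI x1 xN x /\ y = k x))) by (apply ub; eauto).
assert (h2 : Rbar_le (Lub_Rbar (fun y => exists x, inI x1 xN x /\ y = k x)) B)
  by (apply lub; intros y [x [hx ->]]; apply hk, hx).
destruct (Lub_Rbar _); simpl in *; try contradiction; lra.
Qed.

Lemma Rmult_le_of_le_div (al m Phi phi : R) :
  0 <= al -> al <= phi / Phi -> m <= Phi -> 0 <= phi -> al * m <= phi.
Proof.
intros h0 hal hm hphi; destruct (Rle_dec m 0) as [neg|pos]; [nra|].
assert (0 < Phi) by lra.
assert (al * Phi <= phi) by (apply Rmult_le_reg_r with (/ Phi); [apply Rinv_0_lt_compat; lra|];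
  rewrite Rmult_assoc, Rinv_r by lra; lra).
nra.
Qed.

(* Iterating the bound [k] times gives [E s <= c^k (D - w/(1-c)) + w/(1-c)]. *)
Lemma le_of_self_bound (P : R -> Prop) (E : R -> R) (c w D : R) : 0 <= c < 1 ->
  (forall s, P s -> E s <= D) ->
  (forall s, P s -> exists t, P t /\ E s <= c * E t + w) ->
  forall s, P s -> E s <= w / (1 - c).
Proof.
intros hc hD hstep; set (W := w / (1 - c)).
assert (hiter : forall k s, P s -> E s <= c ^ k * (D - W) + W).
{ induction k as [|k IH]; intros s hs; [simpl; pose proof (hD s hs); lra|].
  destruct (hstep s hs) as [t [ht hst]].
  assert (c * E t <= c * (c ^ k * (D - W) + W)) by (apply Rmult_le_compat_l; [lra | apply IH, ht]).
  replace (c ^ S k * (D - W) + W) with (c * (c ^ k * (D - W) + W) + w) by (unfold W; simpl; field; lra).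
  lra. }
intros s hs.
assert (hlim : is_lim_seq (fun k => c ^ k * (D - W) + W) (0 * (D - W) + W)).
{ apply is_lim_seq_plus'; [|apply is_lim_seq_const].
  apply (is_lim_seq_scal_r (fun k => c ^ k) (D - W) 0), is_lim_seq_geom.
  rewrite Rabs_pos_eq; lra. }
pose proof (is_lim_seq_le (fun _ => E s) _ (E s) _ (fun k => hiter k s hs) (is_lim_seq_const _) hlim)
  as hle.
simpl in hle; lra.
Qed.

Section IFS.

Variables (N : nat) (x a b : nat -> R).
Hypotheses (hN : (2 <= N)%nat) (hx : forall k : nat, (1 <= k < N)%nat -> x k < x (S k))
  (hab : forall i : nat, (1 <= i <= N - 1)%nat ->
     a i * x 1%nat + b i = x i /\ a i * x N + b i = x (S i)).

Local Notation x1 := (x 1%nat).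
Local Notation xN := (x N).

Lemma partition_le j k : (1 <= j)%nat -> (j <= k)%nat -> (k <= N)%nat -> x j <= x k.
Proof.
intros hj hjk hkN; induction k as [|k IH]; [lia|].
destruct (Nat.eq_dec j (S k)) as [->|ne]; [lra|].
pose proof (hx k ltac:(lia)); pose proof (IH ltac:(lia) ltac:(lia)); lra.
Qed.

Lemma partition_ends : x1 < xN.
Proof. pose proof (hx 1%nat ltac:(lia)); pose proof (partition_le 2 N ltac:(lia) hN ltac:(lia)); lra. Qed.

Lemma partition_cell s m : x1 <= s -> (1 <= m <= N - 1)%nat -> s <= x (S m) ->
  exists i, (1 <= i <= m)%nat /\ x i <= s <= x (S i).
Proof.
intros hs; induction m as [|m IH]; intros hm hsm; [lia|].
destruct (Nat.eq_dec m 0) as [->|ne]; [exists 1%nat; split; [lia | lra]|].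
destruct (Rle_dec (x (S m)) s) as [le|gt]; [exists (S m); split; [lia | lra]|].
destruct (IH ltac:(lia) ltac:(lra)) as [i [hi his]]; exists i; split; [lia | exact his].
Qed.

Lemma ifs_slope_pos i : (1 <= i <= N - 1)%nat -> 0 < a i.
Proof.
intros hi; destruct (hab i hi) as [e1 e2].
pose proof (hx i ltac:(lia)); pose proof partition_ends; nra.
Qed.

Lemma ifs_maps_into i t : (1 <= i <= N - 1)%nat -> inI x1 xN t ->
  inI x1 xN (a i * t + b i).
Proof.
intros hi [h1 h2]; destruct (hab i hi) as [e1 e2]; pose proof (ifs_slope_pos i hi).
pose proof (partition_le 1 i ltac:(lia) ltac:(lia) ltac:(lia)).
pose proof (partition_le (S i) N ltac:(lia) ltac:(lia) ltac:(lia)).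
split; nra.
Qed.

Lemma ifs_covers s : inI x1 xN s ->
  exists i t, (1 <= i <= N - 1)%nat /\ inI x1 xN t /\ s = a i * t + b i.
Proof.
intros [hs1 hs2].
destruct (partition_cell s (N - 1) hs1 ltac:(lia) ltac:(replace (S (N - 1)) with N by lia; lra))
  as [i [hi [h1 h2]]].
assert (hi' : (1 <= i <= N - 1)%nat) by lia.
destruct (hab i hi') as [e1 e2]; pose proof (ifs_slope_pos i hi').
exists i, ((s - b i) / a i); split; [exact hi'|]; split; [|field; lra].
split; apply Rmult_le_reg_l with (a i); auto;
  replace (a i * ((s - b i) / a i)) with (s - b i) by (field; lra); lra.
Qed.

Lemma scaling_bound_ge0 (alpha : nat -> R -> R) c :
  (forall i t, (1 <= i <= N - 1)%nat -> inI x1 xN t -> Rabs (alpha i t) <= c) -> 0 <= c.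
Proof.
intros hal; pose proof partition_ends.
eapply Rle_trans; [apply Rabs_pos | apply (hal 1%nat x1); [lia | unfold inI; lra]].
Qed.

Lemma fractal_unif_conv alpha h (qs : nat -> R) (Fs : nat -> R -> R) c :
  cont_on x1 xN h -> (forall n, 0 < qs n <= 1) -> is_lim_seq qs 1 -> c < 1 ->
  (forall i t, (1 <= i <= N - 1)%nat -> inI x1 xN t -> Rabs (alpha i t) <= c) ->
  (forall n, (1 <= n)%nat -> is_qMKZ_fractal x N a b alpha n (qs n) h (Fs n)) ->
  forall eps, 0 < eps -> exists n0 : nat, forall n, (n0 <= n)%nat -> (1 <= n)%nat ->
    forall t, inI x1 xN t -> Rabs (Fs n t - h t) < eps.
Proof.
intros hh hq hl hc hal hF eps he.
pose proof partition_ends as hI.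
assert (hc01 : 0 <= c < 1) by (split; [exact (scaling_bound_ge0 alpha c hal) | exact hc]).
set (eta := eps * (1 - c) / 2).
assert (heta : 0 < eta) by (unfold eta; apply Rdiv_lt_0_compat; nra).
destruct (MKZ_unif_conv x1 xN h qs hI hh hq hl eta heta) as [n0 hn0].
exists n0; intros n hn hn1.
destruct (hF n hn1) as [hFc hFeq].
destruct (cont_on_bounded x1 xN (Fs n) ltac:(lra) hFc) as [BF hBF].
destruct (cont_on_bounded x1 xN h ltac:(lra) hh) as [Bh hBh].
assert (hbound : forall t, inI x1 xN t -> Rabs (Fs n t - h t) <= c * eta / (1 - c)).
{ apply (le_of_self_bound _ _ c (c * eta) (BF + Bh) hc01).
  - intros s hs; eapply Rle_trans; [unfold Rminus; apply Rabs_triang|]; rewrite Rabs_Ropp.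
    pose proof (hBF s hs); pose proof (hBh s hs); lra.
  - intros s hs; destruct (ifs_covers s hs) as [i [t [hi [ht ->]]]]; exists t; split; [exact ht|].
    rewrite (hFeq i t hi ht).
    replace (h (a i * t + b i) + alpha i t * (Fs n t - MKZ x1 xN n (qs n) h t) - h (a i * t + b i))
      with (alpha i t * ((Fs n t - h t) - (MKZ x1 xN n (qs n) h t - h t))) by ring.
    rewrite Rabs_mult.
    assert (Rabs ((Fs n t - h t) - (MKZ x1 xN n (qs n) h t - h t)) <= Rabs (Fs n t - h t) + eta)
      by (eapply Rle_trans; [apply Rabs_triang|]; rewrite Rabs_Ropp; pose proof (hn0 n hn t ht); lra).
    eapply Rle_trans; [apply Rmult_le_compat; [apply Rabs_pos | apply Rabs_pos | apply hal; auto | eassumption]|].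
    lra. }
intros t ht; eapply Rle_lt_trans; [exact (hbound t ht)|].
replace (c * eta / (1 - c)) with (c * (eps / 2)) by (unfold eta; field; lra).
nra.
Qed.

Lemma fractal_order alpha f g n q F G c :
  cont_on x1 xN f -> cont_on x1 xN g -> (forall t, inI x1 xN t -> g t <= f t) ->
  0 < q <= 1 -> c < 1 ->
  (forall i t, (1 <= i <= N - 1)%nat -> inI x1 xN t -> Rabs (alpha i t) <= c) ->
  (forall i t, (1 <= i <= N - 1)%nat -> inI x1 xN t ->
     0 <= alpha i t /\
     alpha i t <= minI x1 xN (fun s => f (a i * s + b i) - g (a i * s + b i))
                  / maxI x1 xN (MKZ x1 xN n q (fun s => f s - g s))) ->
  is_qMKZ_fractal x N a b alpha n q f F -> is_qMKZ_fractal x N a b alpha n q g G ->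
  forall t, inI x1 xN t -> G t <= F t.
Proof.
intros hf hg hfg hq hc hal hcond [hFc hFeq] [hGc hGeq].
pose proof partition_ends as hI.
destruct (cont_on_bounded x1 xN f ltac:(lra) hf) as [Bf hBf].
destruct (cont_on_bounded x1 xN g ltac:(lra) hg) as [Bg hBg].
destruct (cont_on_bounded x1 xN F ltac:(lra) hFc) as [BF hBF].
destruct (cont_on_bounded x1 xN G ltac:(lra) hGc) as [BG hBG].
assert (hc01 : 0 <= c < 1) by (split; [exact (scaling_bound_ge0 alpha c hal) | exact hc]).
assert (hMfg : forall s, inI x1 xN s -> MKZ x1 xN n q (fun s => f s - g s) s <= Bf + Bg).
{ intros s hs; eapply Rle_trans; [apply Rle_abs|]; apply MKZ_bound; auto; intros u hu.
  eapply Rle_trans; [unfold Rminus; apply Rabs_triang|]; rewrite Rabs_Ropp.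
  pose proof (hBf u hu); pose proof (hBg u hu); lra. }
assert (hmono : forall i t, (1 <= i <= N - 1)%nat -> inI x1 xN t ->
          alpha i t * (F t - G t) <= F (a i * t + b i) - G (a i * t + b i)).
{ intros i t hi ht; rewrite (hFeq i t hi ht), (hGeq i t hi ht).
  destruct (hcond i t hi ht) as [hal0 hal1].
  destruct (minI_bounds x1 xN (fun s => f (a i * s + b i) - g (a i * s + b i)) t ht)
    as [hphi0 hphi]; [intros s hs; pose proof (hfg _ (ifs_maps_into i s hi hs)); lra|].
  assert (hscaled : alpha i t * MKZ x1 xN n q (fun s => f s - g s) t
          <= minI x1 xN (fun s => f (a i * s + b i) - g (a i * s + b i)))
    by (apply (Rmult_le_of_le_div _ _ _ _ hal0 hal1); [apply (le_maxI _ _ _ t _ ht hMfg) | exact hphi0]).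
  rewrite (MKZ_sub x1 xN n q hI hq f g Bf Bg t ht hBf hBg) in hscaled.
  lra. }
intros t ht.
assert (hneg : Rmax 0 (G t - F t) <= 0 / (1 - c)).
{ apply (le_of_self_bound (inI x1 xN) (fun s => Rmax 0 (G s - F s)) c 0 (BF + BG) hc01); [| |exact ht].
  - intros s hs; pose proof (hBF s hs); pose proof (hBG s hs).
    pose proof (Rabs_pos (F s)); pose proof (Rabs_pos (G s)); pose proof (Rle_abs (G s)); pose proof (Rabs_maj2 (F s)).
    apply Rmax_lub; lra.
  - intros s hs; destruct (ifs_covers s hs) as [i [u [hi [hu ->]]]]; exists u; split; [exact hu|].
    pose proof (hmono i u hi hu); destruct (hcond i u hi hu) as [hal0 _].
    assert (alpha i u <= c) by (eapply Rle_trans; [apply Rle_abs | apply hal; auto]).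
    pose proof (Rmax_l 0 (G u - F u)); pose proof (Rmax_r 0 (G u - F u)).
    assert (alpha i u * (G u - F u) <= c * Rmax 0 (G u - F u)) by nra.
    apply Rmax_lub; nra. }
pose proof (Rmax_r 0 (G t - F t)); unfold Rdiv in hneg; rewrite Rmult_0_l in hneg; lra.
Qed.

End IFS.

Theorem corollary4p1
  (N : nat) (x : nat -> R) (a b : nat -> R) (alpha : nat -> R -> R)
  (f g : R -> R) (qs : nat -> R)
  (F G : nat -> R -> R) :
  (2 <= N)%nat ->
  (forall k : nat, (1 <= k < N)%nat -> x k < x (S k)) ->
  (forall i : nat, (1 <= i <= N - 1)%nat ->
     a i * x 1%nat + b i = x i /\ a i * x N + b i = x (S i)) ->
  cont_on (x 1%nat) (x N) f ->
  cont_on (x 1%nat) (x N) g ->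
  (forall t, inI (x 1%nat) (x N) t -> g t <= f t) ->
  (forall n, 0 < qs n <= 1) ->
  is_lim_seq qs 1 ->
  (forall i : nat, (1 <= i <= N - 1)%nat -> cont_on (x 1%nat) (x N) (alpha i)) ->
  (* ||alpha||_oo < 1 *)
  (exists c, c < 1 /\ forall i t, (1 <= i <= N - 1)%nat -> inI (x 1%nat) (x N) t ->
       Rabs (alpha i t) <= c) ->
  (forall (n i : nat) (t : R), (1 <= n)%nat -> (1 <= i <= N - 1)%nat ->
     inI (x 1%nat) (x N) t ->
     0 <= alpha i t /\
     alpha i t <= Rmin
       (minI (x 1%nat) (x N) (fun s => f (a i * s + b i) - g (a i * s + b i))
        / maxI (x 1%nat) (x N) (MKZ (x 1%nat) (x N) n (qs n) (fun s => f s - g s)))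
       1) ->
  (forall n, (1 <= n)%nat -> is_qMKZ_fractal x N a b alpha n (qs n) f (F n)) ->
  (forall n, (1 <= n)%nat -> is_qMKZ_fractal x N a b alpha n (qs n) g (G n)) ->
  (forall eps, 0 < eps -> exists n0 : nat, forall n, (n0 <= n)%nat -> (1 <= n)%nat ->
     forall t, inI (x 1%nat) (x N) t -> Rabs (F n t - f t) < eps) /\
  (forall eps, 0 < eps -> exists n0 : nat, forall n, (n0 <= n)%nat -> (1 <= n)%nat ->
     forall t, inI (x 1%nat) (x N) t -> Rabs (G n t - g t) < eps) /\
  (forall n, (1 <= n)%nat -> forall t, inI (x 1%nat) (x N) t -> G n t <= F n t).
Proof.
(* Continuity of the alpha_i only matters for the existence of the fractal functions,
   which are given here. *)
intros hN hx hab hf hg hfg hq hql _ [c [hc hal]] hcond hF hG.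
split; [|split].
- exact (fractal_unif_conv N x a b hN hx hab alpha f qs F c hf hq hql hc hal hF).
- exact (fractal_unif_conv N x a b hN hx hab alpha g qs G c hg hq hql hc hal hG).
- intros n hn.
  apply (fractal_order N x a b hN hx hab alpha f g n (qs n) (F n) (G n) c hf hg hfg (hq n) hc hal);
    [intros i t hi ht; destruct (hcond n i t hn hi ht) as [h0 h1];
     split; [exact h0 | eapply Rle_trans; [exact h1 | apply Rmin_l]]
    | apply hF, hn | apply hG, hn].
Qed.
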